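(* Let $m\ge n$, $B\in\mathbb R^{n\times m}$ of full row rank, $f,h$ convex and continuously differentiable with Lipschitz gradients, $\mathcal L(u,p)=f(u)-h(p)+(Bu,p)$ with saddle point $(u^*,p^* )$, and $T_{\mathcal U},\mathcal I_{\mathcal V}$ ($m\times m$), $T_{\mathcal P},\mathcal I_{\mathcal Q}$ ($n\times n$) symmetric positive definite. Suppose $h\in\mathcal S^{1,1}_{\mu_{h,T_{\mathcal P}},L_{h,T_{\mathcal P}}}$ w.r.t. $T_{\mathcal P}$ with $L_{h,T_{\mathcal P}}\le1$, $f\in\mathcal S^{1,1}_{\mu_{f,T_{\mathcal U}},L_{f,T_{\mathcal U}}}$ w.r.t. $T_{\mathcal U}$ with $L_{f,T_{\mathcal U}}\le1$, $f_B$ is strongly convex w.r.t. $\mathcal I_{\mathcal V}$ with $\mu_{f_B,\mathcal I_{\mathcal V}}>0$, and $h_B$ is strongly convex w.r.t. $\mathcal I_{\mathcal Q}$ with $\mu_{h_B,\mathcal I_{\mathcal Q}}>0$. Let $(u_k,p_k)$ be generated from $(u_0,p_0)$ by $$u_{k+1/2}=u_k-T_{\mathcal U}^{-1}(\nabla f(u_k)+B^\top p_k),\qquad p_{k+1}=p_k-\alpha_k\mathcal I_{\mathcal Q}^{-1}(\nabla h(p_k)-Bu_{k+1/2}),$$ where $u_{k+1}$ is any point with $\|\nabla\tilde f_B(u_{k+1};u_k,p_{k+1})\|^2_{\mathcal I_{\mathcal V}^{-1}}\le\epsilon_k$ for $k=0,1,2,\dots$, and $\tilde f_B(u;u_k,p_{k+1})=f_B(u)+\frac1{2\alpha_k}\|u-u_k+\alpha_k\mathcal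 I_{\mathcal V}^{-1}B^\top(p_{k+1}-T_{\mathcal P}^{-1}\nabla h(p_{k+1}))\|^2_{\mathcal I_{\mathcal V}}$. Then for $0<\alpha_k<\mu_{h_B,\mathcal I_{\mathcal Q}}/L_{S,\mathcal Q}^2$ and $\mu_k=\min\{\mu_{f_B,\mathcal I_{\mathcal V}}/2,\ \mu_{h_B,\mathcal I_{\mathcal Q}}-\alpha_kL_{S,\mathcal Q}^2\}$, $$\mathcal E(u_{k+1},p_{k+1})\le\frac1{1+\alpha_k\mu_k}\mathcal E(u_k,p_k)+\frac{2\alpha_k}{(1+\alpha_k\mu_k)\mu_{f_B,\mathcal I_{\mathcal V}}}\epsilon_k,$$ where $L_{S,\mathcal Q}^2=L_{h_B,\mathcal I_{\mathcal Q}}^2+L_{e_{\mathcal U},\mathcal I_{\mathcal V}}^2L_S^2$. In particular, for $\alpha_k=\mu_{h_B,\mathcal I_{\mathcal Q}}/(2L_{S,\mathcal Q}^2)$, $$\mathcal E(u_{n+1},p_{n+1})\le\rho^{n+1}\mathcal E(u_0,p_0)+\frac{\mu_{h_B,\mathcal I_{\mathcal Q}}}{\mu_{f_B,\mathcal I_{\mathcal V}}L_{S,\mathcal Q}^2}\sum_{k=0}^n\rho^{n-k+1}\epsilon_k,$$ where $\mu=\min\{\mu_{f_B,\mathcal I_{\mathcal V}},\mu_{h_B,\mathcal I_{\mathcal Q}}\}$ and $\rho=1/(1+\mu_{h_B,\mathcal I_{\mathcal Q}}\mu/(4L_{S,\mathcal Q}^2))\in(0,1)$.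
   Context: A saddle point satisfies $\nabla f(u^* )+B^\top p^*=0$, $Bu^*=\nabla h(p^* )$. For SPD $M$, $\|x\|_M=(Mx,x)^{1/2}$; $D_g(y,x)=g(y)-g(x)-(\nabla g(x),y-x)$; $g\in\mathcal S^{1,1}_{\mu_{g,M},L_{g,M}}$ w.r.t. $M$ means $\frac{\mu_{g,M}}2\|x-y\|_M^2\le D_g(y,x)\le\frac{L_{g,M}}2\|x-y\|_M^2$ for all $x,y$. Define $f_B(u)=f(u)+\frac12(B^\top T_{\mathcal P}^{-1}Bu,u)$, $h_B(p)=h(p)+\frac12(BT_{\mathcal U}^{-1}B^\top p,p)$, $e_{\mathcal U}(u)=u-T_{\mathcal U}^{-1}\nabla f(u)$, $\mathcal E(u,p)=\frac12\|u-u^*\|^2_{\mathcal I_{\mathcal V}}+\frac12\|p-p^*\|^2_{\mathcal I_{\mathcal Q}}$; $L_{h_B,\mathcal I_{\mathcal Q}}$ is the Lipschitz constant of $\nabla h_B$ (dual norm $\|\cdot\|_{\mathcal I_{\mathcal Q}^{-1}}$ vs $\|\cdot\|_{\mathcal I_{\mathcal Q}}$), $L_{e_{\mathcal U},\mathcal I_{\mathcal V}}$ the Lipschitz constant of $e_{\mathcal U}$ in $\|\cdot\|_{\mathcal I_{\mathcal V}}$, $L_S^2=\lambda_{\max}(\mathcal I_{\mathcal Q}^{-1}B\mathcal I_{\mathcal V}^{-1}B^\top)$. *)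

From HB Require Import structures.
From mathcomp Require Import all_boot all_order all_algebra.
From mathcomp Require Import all_classical all_reals all_analysis.
Set Implicit Arguments. Unset Strict Implicit. Unset Printing Implicit Defensive.
Import Order.TTheory GRing.Theory Num.Theory.
Local Open Scope ring_scope.

Section Defs.
Variable R : realType.

Definition dotv k (x y : 'cV[R]_k) : R := (x^T *m y) 0 0.

Definition nsq k (M : 'M[R]_k) (x : 'cV[R]_k) : R := dotv (M *m x) x.

Definition SPD k (M : 'M[R]_k) : Prop :=
  M^T = M /\ forall x : 'cV[R]_k, x != 0 -> 0 < nsq M x.

Definition bregman k (g : 'cV[R]_k -> R) (dg : 'cV[R]_k -> 'cV[R]_k) y x : R :=
  g y - g x - dotv (dg x) (y - x).

Definition S11 k (g : 'cV[R]_k -> R) (dg : 'cV[R]_k -> 'cV[R]_k)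
  (M : 'M[R]_k) (mu L : R) : Prop :=
  forall x y, mu / 2 * nsq M (x - y) <= bregman g dg y x /\
              bregman g dg y x <= L / 2 * nsq M (x - y).

Definition strongly_convex k (g : 'cV[R]_k -> R) (dg : 'cV[R]_k -> 'cV[R]_k)
  (M : 'M[R]_k) (mu : R) : Prop :=
  forall x y, mu / 2 * nsq M (x - y) <= bregman g dg y x.

Variables (m n : nat).

Definition fB (f : 'cV[R]_m -> R) (B : 'M[R]_(n, m)) (TP : 'M[R]_n) u : R :=
  f u + 1 / 2 * dotv (B^T *m invmx TP *m B *m u) u.
Definition dfB (gf : 'cV[R]_m -> 'cV[R]_m) (B : 'M[R]_(n, m)) (TP : 'M[R]_n) u
  : 'cV[R]_m := gf u + B^T *m invmx TP *m B *m u.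

Definition hB (h : 'cV[R]_n -> R) (B : 'M[R]_(n, m)) (TU : 'M[R]_m) p : R :=
  h p + 1 / 2 * dotv (B *m invmx TU *m B^T *m p) p.
Definition dhB (gh : 'cV[R]_n -> 'cV[R]_n) (B : 'M[R]_(n, m)) (TU : 'M[R]_m) p
  : 'cV[R]_n := gh p + B *m invmx TU *m B^T *m p.

Definition eU (gf : 'cV[R]_m -> 'cV[R]_m) (TU : 'M[R]_m) u : 'cV[R]_m :=
  u - invmx TU *m gf u.

Definition Energy (IV : 'M[R]_m) (IQ : 'M[R]_n) (us : 'cV[R]_m) (ps : 'cV[R]_n)
  u p : R := 1 / 2 * nsq IV (u - us) + 1 / 2 * nsq IQ (p - ps).

Definition ftB (f : 'cV[R]_m -> R) (gh : 'cV[R]_n -> 'cV[R]_n) (B : 'M[R]_(n, m))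
  (TP : 'M[R]_n) (IV : 'M[R]_m) (a : R) (uk : 'cV[R]_m) (p1 : 'cV[R]_n) u : R :=
  fB f B TP u + 1 / (2 * a) *
    nsq IV (u - uk + a *: (invmx IV *m B^T *m (p1 - invmx TP *m gh p1))).

(* its gradient in u (IV symmetric):
   grad f_B(u) + (1/a) IV (u - uk + a IV^{-1} B^T (p1 - TP^{-1} grad h(p1))) *)
Definition dftB (gf : 'cV[R]_m -> 'cV[R]_m) (gh : 'cV[R]_n -> 'cV[R]_n)
  (B : 'M[R]_(n, m)) (TP : 'M[R]_n) (IV : 'M[R]_m) (a : R) (uk : 'cV[R]_m)
  (p1 : 'cV[R]_n) u : 'cV[R]_m :=
  dfB gf B TP u +
    a^-1 *: (IV *m (u - uk + a *: (invmx IV *m B^T *m (p1 - invmx TP *m gh p1)))).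

End Defs.

(* The iteration is an explicit step in [p] followed by an inexact implicit
   step in [u] for the flow [u' = - tpd_u], [p' = - tpd_p] of the transformed
   primal-dual operator.  This operator vanishes at the saddle point and is
   strongly monotone with constants [mu_fB / 2] and [mu_hB / 2]: the cross
   terms are absorbed by cocoercivity of [grad f] and [grad h], which is where
   [L <= 1] enters.  Expanding the energy along one step, the error of the
   explicit [p]-step is bounded by Young's inequality with the Lipschitz
   constants of [grad h_B] and [e_U] and the bound
   [|B w|^2_{IQ^-1} <= L_S^2 |w|^2_IV], obtained by maximising a generalized
   Rayleigh quotient; the inexactness of the [u]-step costs [2 a eps / mu_fB].
   This gives the one-step contraction; the corollary follows by unrolling it
   with a constant step size. *)

From HB Require Import structures.
From mathcomp Require Import all_boot all_order all_algebra.
From mathcomp Require Import all_classical all_reals all_analysis.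
From mathcomp Require Import ring lra.
Import Order.TTheory GRing.Theory Num.Theory.
Local Open Scope ring_scope.

Set Implicit Arguments. Unset Strict Implicit. Unset Printing Implicit Defensive.

Section InnerProduct.
Variable R : realType.
Implicit Types (k : nat).

Lemma dotvC k (x y : 'cV[R]_k) : dotv x y = dotv y x.
Proof. by rewrite /dotv -{1}(trmxK y) -trmx_mul mxE. Qed.

Lemma dotvDl k (x y z : 'cV[R]_k) : dotv (x + y) z = dotv x z + dotv y z.
Proof. by rewrite /dotv linearD /= mulmxDl mxE. Qed.

Lemma dotvDr k (x y z : 'cV[R]_k) : dotv z (x + y) = dotv z x + dotv z y.
Proof. by rewrite /dotv mulmxDr mxE. Qed.

Lemma dotvZl k a (x z : 'cV[R]_k) : dotv (a *: x) z = a * dotv x z.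
Proof. by rewrite /dotv linearZ /= -scalemxAl mxE. Qed.

Lemma dotvZr k a (x z : 'cV[R]_k) : dotv z (a *: x) = a * dotv z x.
Proof. by rewrite /dotv -scalemxAr mxE. Qed.

Lemma dotvNl k (x z : 'cV[R]_k) : dotv (- x) z = - dotv x z.
Proof. by rewrite -scaleN1r dotvZl mulN1r. Qed.

Lemma dotvNr k (x z : 'cV[R]_k) : dotv z (- x) = - dotv z x.
Proof. by rewrite -scaleN1r dotvZr mulN1r. Qed.

Lemma dotvBl k (x y z : 'cV[R]_k) : dotv (x - y) z = dotv x z - dotv y z.
Proof. by rewrite dotvDl dotvNl. Qed.

Lemma dotvBr k (x y z : 'cV[R]_k) : dotv z (x - y) = dotv z x - dotv z y.
Proof. by rewrite dotvDr dotvNr. Qed.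

Lemma dotv0l k (z : 'cV[R]_k) : dotv 0 z = 0.
Proof. by rewrite /dotv linear0 mul0mx mxE. Qed.

Lemma dotvMl k l (A : 'M[R]_(k, l)) x y : dotv (A *m x) y = dotv x (A^T *m y).
Proof. by rewrite /dotv trmx_mul mulmxA. Qed.

Lemma dotvv_eq0 k (x : 'cV[R]_k) : dotv x x = 0 -> x = 0.
Proof.
have -> : dotv x x = \sum_j x j 0 ^+ 2.
  by rewrite /dotv !mxE; apply: eq_bigr => j _; rewrite mxE expr2.
move=> /eqP; rewrite psumr_eq0 => [/allP x0|j _]; last exact: sqr_ge0.
apply/matrixP => i j; rewrite ord1 mxE.
by have := x0 i (mem_index_enum _); rewrite sqrf_eq0 => /eqP.
Qed.

Lemma nsqZ k (M : 'M[R]_k) a x : nsq M (a *: x) = a ^+ 2 * nsq M x.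
Proof. by rewrite /nsq -scalemxAr dotvZl dotvZr mulrA expr2. Qed.

Lemma nsqN k (M : 'M[R]_k) x : nsq M (- x) = nsq M x.
Proof. by rewrite -scaleN1r nsqZ sqrrN expr1n mul1r. Qed.

Lemma nsqD k (M : 'M[R]_k) x y : M^T = M ->
  nsq M (x + y) = nsq M x + 2 * dotv (M *m x) y + nsq M y.
Proof.
move=> MT; rewrite /nsq mulmxDr dotvDl !dotvDr (dotvMl M y x) MT (dotvC y).
ring.
Qed.

Lemma nsqB k (M : 'M[R]_k) x y : M^T = M ->
  nsq M (x - y) = nsq M x - 2 * dotv (M *m x) y + nsq M y.
Proof. by move=> MT; rewrite nsqD // nsqN dotvNr mulrN. Qed.

Lemma nsq_three_point k (M : 'M[R]_k) x1 x0 xs : M^T = M ->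
  nsq M (x1 - xs) - nsq M (x0 - xs) =
  2 * dotv (M *m (x1 - x0)) (x1 - xs) - nsq M (x1 - x0).
Proof.
move=> MT; have -> : x0 - xs = (x1 - xs) - (x1 - x0).
  by rewrite [RHS]addrC addrA opprB subrK.
rewrite [nsq M (_ - (_ - _))]nsqB // (dotvMl M (x1 - xs)) MT (dotvC (x1 - xs)).
ring.
Qed.

Lemma SPD_sym k (M : 'M[R]_k) : SPD M -> M^T = M.
Proof. by case. Qed.

Lemma nsq_ge0 k (M : 'M[R]_k) x : SPD M -> 0 <= nsq M x.
Proof.
case=> _ M_pos; have [->|/M_pos/ltW //] := eqVneq x 0.
by rewrite /nsq mulmx0 dotv0l.
Qed.

Lemma nsq_eq0 k (M : 'M[R]_k) x : SPD M -> nsq M x = 0 -> x = 0.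
Proof. by case=> _ M_pos x0; apply/eqP; apply: contraT => /M_pos; rewrite x0 ltxx. Qed.

Lemma SPD_unitmx k (M : 'M[R]_k) : SPD M -> M \in unitmx.
Proof.
move=> HM; rewrite -row_free_unit -kermx_eq0; apply/eqP/row_matrixP => i.
rewrite row0; set v := row i (kermx M).
have vM : v *m M = 0 by apply/sub_kermxP; rewrite row_sub.
apply: trmx_inj; rewrite trmx0; apply: (nsq_eq0 HM).
by rewrite /nsq -(SPD_sym HM) -trmx_mul vM trmx0 dotv0l.
Qed.

Lemma nsq_invmx k (M : 'M[R]_k) x : SPD M -> nsq M (invmx M *m x) = nsq (invmx M) x.
Proof. by move=> HM; rewrite /nsq mulmxA mulmxV ?SPD_unitmx // mul1mx dotvC. Qed.

Lemma SPD_invmx k (M : 'M[R]_k) : SPD M -> SPD (invmx M).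
Proof.
move=> HM; split; first by rewrite trmx_inv SPD_sym.
move=> x x0; rewrite -nsq_invmx //; case: (HM) => _ -> //.
apply: contra x0 => /eqP/(congr1 (mulmx M)).
by rewrite mulmxA mulmxV ?SPD_unitmx // mul1mx mulmx0 => ->.
Qed.

Lemma dotv_young k (M : 'M[R]_k) g y c : SPD M -> 0 < c ->
  2 * dotv g y <= c^-1 * nsq (invmx M) g + c * nsq M y.
Proof.
move=> HM c0; have := nsq_ge0 (c^-1 *: (invmx M *m g) - y) HM.
rewrite nsqB ?SPD_sym // nsqZ nsq_invmx // -scalemxAr dotvZl mulmxA.
rewrite mulmxV ?SPD_unitmx // mul1mx => /(mulr_ge0 (ltW c0)).
suff -> : c * (c^-1 ^+ 2 * nsq (invmx M) g - 2 * (c^-1 * dotv g y) + nsq M y)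
          = c^-1 * nsq (invmx M) g + c * nsq M y - 2 * dotv g y by rewrite subr_ge0.
by field; rewrite gt_eqF.
Qed.

Lemma dotv_young_le k (M : 'M[R]_k) g y c X : SPD M -> 0 <= c -> 0 <= X ->
  nsq (invmx M) g <= c * X -> 2 * dotv g y <= X + c * nsq M y.
Proof.
move=> HM; rewrite le_eqVlt => /orP[/eqP<- X0|c0 X0 gX].
  rewrite !mul0r addr0 => g0.
  have HMi := SPD_invmx HM.
  have /(nsq_eq0 HMi) -> : nsq (invmx M) g = 0 by apply/le_anti; rewrite g0 nsq_ge0.
  by rewrite dotv0l mulr0.
apply: (le_trans (dotv_young _ _ HM c0)); rewrite lerD2r.
by rewrite mulrC ler_pdivrMr // mulrC.
Qed.

End InnerProduct.

Section Convexity.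
Variables (R : realType) (k : nat) (g : 'cV[R]_k -> R) (dg : 'cV[R]_k -> 'cV[R]_k).

Lemma bregman_add_swap x y :
  bregman g dg y x + bregman g dg x y = dotv (dg y - dg x) (y - x).
Proof. by rewrite /bregman -(opprB y x) dotvNr dotvBl; ring. Qed.

Lemma strongly_convex_monotone M mu x y : M^T = M -> strongly_convex g dg M mu ->
  mu * nsq M (y - x) <= dotv (dg y - dg x) (y - x).
Proof.
move=> MT Hg; rewrite -bregman_add_swap.
have := Hg x y; have := Hg y x; rewrite -(opprB x y) nsqN; lra.
Qed.

Variables (M : 'M[R]_k) (mu L : R).
Hypotheses (HM : SPD M) (Hg : S11 g dg M mu L) (mu0 : 0 <= mu) (L1 : L <= 1).

(* Compare [x] with the gradient step [z] from [y]: convexity gives [D(z,x) >= 0],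
   the upper bound with [L <= 1] gives [D(z,y) <= |dg y - dg x|^2 / 2]. *)
Lemma S11_bregman_ge x y : nsq (invmx M) (dg y - dg x) / 2 <= bregman g dg y x.
Proof.
set G := dg y - dg x; set z := y - invmx M *m G.
have Dzx : 0 <= bregman g dg z x.
  have [+ _] := Hg x z; apply: le_trans.
  by apply: mulr_ge0; [apply: divr_ge0 | apply: nsq_ge0].
have Dzy : bregman g dg z y <= nsq (invmx M) G / 2.
  have [_ +] := Hg y z; move/le_trans; apply.
  rewrite /z opprB addrC subrK nsq_invmx //.
  by rewrite mulrAC ler_pM2r ?invr_gt0 // ler_piMl // (nsq_ge0 _ (SPD_invmx HM)).
move: Dzx Dzy; rewrite /bregman.
have -> : z - x = (y - x) - invmx M *m G by rewrite /z addrAC.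
have -> : z - y = - (invmx M *m G) by rewrite /z addrAC subrr add0r.
have : dotv (dg y) (invmx M *m G) - dotv (dg x) (invmx M *m G) = nsq (invmx M) G.
  by rewrite -dotvBl /nsq dotvC.
rewrite (dotvBr (y - x)) dotvNr; lra.
Qed.

Lemma S11_cocoercive x y :
  nsq (invmx M) (dg y - dg x) <= dotv (dg y - dg x) (y - x).
Proof.
rewrite -bregman_add_swap; have := S11_bregman_ge x y; have := S11_bregman_ge y x.
rewrite -(opprB (dg y)) nsqN; lra.
Qed.

End Convexity.

Section GeneralizedRayleigh.
Import numFieldNormedType.Exports.
Local Open Scope classical_set_scope.
Variables (R : realType) (k : nat).

Lemma nsq_continuous (M : 'M[R]_k) : continuous (fun v : 'rV[R]_k => nsq M v^T).
Proof.
have -> : (fun v : 'rV[R]_k => nsq M v^T) =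
          (fun v => \sum_i (\sum_j M i j * v 0 j) * v 0 i).
  apply: funext => v; rewrite /nsq /dotv !mxE; apply: eq_bigr => i _.
  by rewrite !mxE; congr (_ * _); apply: eq_bigr => j _; rewrite !mxE.
apply: (@continuous_big _ _ +%R 0 xpredT) => [|i _]; first exact: add_continuous.
move=> v; apply: continuousM; last exact: coord_continuous.
apply: (@continuous_big _ _ +%R 0 xpredT) => [|j _]; first exact: add_continuous.
by move=> w; apply: continuousM; [exact: cst_continuous | exact: coord_continuous].
Qed.

(* The quotient [nsq S w / nsq V w] is continuous on the compact unit sphere,
   and homogeneous of degree 0, so its maximum over the sphere is global. *)
Lemma nsq_ratio_max (S V : 'M[R]_k) : SPD V -> (0 < k)%N ->
  exists2 c : 'cV[R]_k, c != 0 & forall w, nsq S w * nsq V c <= nsq S c * nsq V w.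
Proof.
move=> HV k0; pose F (v : 'rV[R]_k) := nsq S v^T / nsq V v^T.
pose A := [set v : 'rV[R]_k | `|v| = 1].
have A_neq0 v : A v -> v != 0.
  rewrite /A /= => v1; apply/eqP => v0.
  by move: v1; rewrite v0 normr0 => /eqP; rewrite eq_sym oner_eq0.
have A0 : A !=set0.
  have e0 : (const_mx 1 : 'rV[R]_k) != 0.
    apply/eqP => /matrixP /(_ ord0 (Ordinal k0)).
    by rewrite !mxE => /eqP; rewrite oner_eq0.
  exists (`|(const_mx 1 : 'rV[R]_k)|^-1 *: const_mx 1).
  by apply: normrZV; rewrite unitfE normr_eq0.
have cA : compact A.
  apply: bounded_closed_compact.
    exists 1; split; first by rewrite realE ler01.
    by move=> M M1 v; rewrite /A /= => ->; apply: ltW.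
  apply: (@preimage_closed _ _ (fun v : 'rV[R]_k => `|v|) [set 1]); last exact: closed_eq.
  by move=> v _; apply: norm_continuous.
have cF : {within A, continuous F}.
  apply: continuous_in_subspaceT => v; rewrite inE => /A_neq0; rewrite -trmx_eq0 => v0.
  have -> : F = (fun v => nsq S v^T) \* (fun v => (nsq V v^T)^-1) by [].
  apply: continuousM; first exact: nsq_continuous.
  apply: continuousV; last exact: nsq_continuous.
  by apply/eqP => /(nsq_eq0 HV); apply/eqP.
have [c0 /[!inE] Ac0 Hmax] := EVT_max_rV A0 cA cF.
have c0T : c0^T != 0 by rewrite trmx_eq0 A_neq0.
have Vc0 : 0 < nsq V c0^T by case: HV => _; apply.
exists c0^T => // w; have [->|w0] := eqVneq w 0.
  by rewrite /nsq !mulmx0 !dotv0l mul0r mulr0.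
have Vw : 0 < nsq V w by case: HV => _; apply.
have wT : `|w^T| \is a GRing.unit.
  by rewrite unitfE normr_eq0 trmx_eq0.
have /[!inE] := Hmax (`|w^T|^-1 *: w^T); rewrite /A /= normrZV // => /(_ erefl).
rewrite /F linearZ /= trmxK !nsqZ -mulf_div divff ?mul1r; last first.
  by rewrite expf_neq0 // invr_eq0 -unitfE.
by rewrite ler_pdivrMr // mulrAC ler_pdivlMr.
Qed.

End GeneralizedRayleigh.

Lemma eigenvalue_trmxP (F : fieldType) k (A : 'M[F]_k) a :
  eigenvalue A a <-> exists2 x : 'cV_k, A^T *m x = a *: x & x != 0.
Proof.
split=> [/eigenvalueP [v vA v0]|[x Ax x0]]; last apply/eigenvalueP.
  by exists v^T; rewrite ?trmx_eq0 // -trmx_mul vA linearZ.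
by exists x^T; rewrite ?trmx_eq0 // -(trmxK A) -trmx_mul Ax linearZ.
Qed.

Section GeneralizedEigenvector.
Variables (R : realType) (k : nat).

Lemma quadratic_le0_slope0 (D Q : R) :
  (forall s, 2 * s * D + s ^+ 2 * Q <= 0) -> D = 0.
Proof.
move=> H; set t := 1 + `|Q|.
have Qt : - `|Q| <= Q by rewrite lerNl -normrN ler_norm.
have t0 : 0 < t by rewrite /t; have := normr_ge0 Q; lra.
have c0 : 0 < 2 * t + Q by rewrite /t; have := normr_ge0 Q; lra.
have key : (2 * (D / t) * D + (D / t) ^+ 2 * Q) * t ^+ 2 = D ^+ 2 * (2 * t + Q).
  by field; rewrite gt_eqF.
have : D ^+ 2 * (2 * t + Q) <= 0.
  by rewrite -key; apply: mulr_le0_ge0 => //; apply: sqr_ge0.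
rewrite pmulr_lle0 // => D2; apply/eqP.
by rewrite -sqrf_eq0 eq_le D2 sqr_ge0.
Qed.

(* A maximiser of [nsq S w / nsq V w] is a critical point, which is the
   generalized eigenvalue equation. *)
Lemma nsq_ratio_max_eigen (S V : 'M[R]_k) c : S^T = S -> SPD V -> c != 0 ->
  (forall w, nsq S w * nsq V c <= nsq S c * nsq V w) ->
  S *m c = (nsq S c / nsq V c) *: (V *m c).
Proof.
move=> ST HV c0 Hc; have Vc : 0 < nsq V c by case: HV => _; apply.
set r := nsq S c / nsq V c; pose N := S - r *: V.
have NT : N^T = N by rewrite /N linearB /= linearZ /= ST SPD_sym.
have EN v : nsq N v = nsq S v - r * nsq V v.
  by rewrite /nsq /N mulmxBl dotvBl -scalemxAl dotvZl.
have N_le0 v : nsq N v <= 0 by rewrite EN subr_le0 /r mulrAC ler_pdivlMr.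
have Nc0 : nsq N c = 0 by rewrite EN /r divfK ?subrr // gt_eqF.
have NcE : N *m c = 0.
  apply: dotvv_eq0; apply: (@quadratic_le0_slope0 _ (nsq N (N *m c))) => s.
  by have := N_le0 (c + s *: (N *m c)); rewrite nsqD // Nc0 nsqZ dotvZr add0r mulrA.
by apply/eqP; rewrite -subr_eq0 scalemxAl -mulmxBl; apply/eqP.
Qed.

End GeneralizedEigenvector.

Section SchurComplementBound.
Variables (R : realType) (m n : nat) (B : 'M[R]_(n, m)) (IV : 'M[R]_m) (IQ : 'M[R]_n).
Hypotheses (HV : SPD IV) (HQ : SPD IQ).

Local Notation K := (invmx IQ *m B *m invmx IV *m B^T).

Lemma trmx_schur : K^T = B *m invmx IV *m B^T *m invmx IQ.
Proof.
by rewrite !trmx_mul trmxK !(SPD_sym (SPD_invmx _)) // !mulmxA.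
Qed.

Lemma schur_eigenvalue_ge0 a : eigenvalue K a -> 0 <= a.
Proof.
move=> /eigenvalue_trmxP [x Kx x0].
have Px : 0 < nsq (invmx IQ) x by case: (SPD_invmx HQ) => _; apply.
rewrite -(pmulr_lge0 _ Px) /nsq dotvC -dotvZl -Kx trmx_schur -!mulmxA dotvMl.
exact: nsq_ge0 _ (SPD_invmx HV).
Qed.

Lemma nsq_mulmx_le_schur LS2 : 0 <= LS2 -> (forall a, eigenvalue K a -> a <= LS2) ->
  forall w, nsq (invmx IQ) (B *m w) <= LS2 * nsq IV w.
Proof.
move=> LS0 LSmax w; pose S := B^T *m invmx IQ *m B.
have ES v : nsq (invmx IQ) (B *m v) = nsq S v.
  by rewrite /nsq /S -!mulmxA (dotvMl B^T) trmxK.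
have ST : S^T = S by rewrite /S !trmx_mul trmxK (SPD_sym (SPD_invmx HQ)) mulmxA.
rewrite ES; have [m0|m_gt0] := posnP m.
  have -> : w = 0 by apply/matrixP => i; suff : (i < 0)%N by []; rewrite -m0 ltn_ord.
  by rewrite /nsq !mulmx0 dotv0l mulr0.
have [c c0 Hc] := nsq_ratio_max S HV m_gt0.
have Vc : 0 < nsq IV c by case: HV => _; apply.
have Sc := nsq_ratio_max_eigen ST HV c0 Hc.
set r := nsq S c / nsq IV c in Sc.
have Sr : nsq S w <= r * nsq IV w by rewrite mulrAC ler_pdivlMr.
apply: (le_trans Sr); apply: ler_wpM2r; first exact: nsq_ge0.
have [r_le0|r_gt0] := lerP r 0; first exact: le_trans r_le0 LS0.
apply: LSmax; apply/eigenvalue_trmxP; exists (B *m c).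
  have -> : K^T *m (B *m c) = B *m (invmx IV *m (S *m c)).
    by rewrite trmx_schur /S !mulmxA.
  by rewrite Sc -!scalemxAr (mulmxA (invmx IV)) mulVmx ?SPD_unitmx // mul1mx.
apply: contraTneq r_gt0 => Bc0.
by rewrite /r -ES Bc0 /nsq mulmx0 dotv0l mul0r ltxx.
Qed.

End SchurComplementBound.

Ltac mx_ring := rewrite ?(mulmxDr, mulmxN, mulmxDl, mulNmx, mulmxA);
  apply/matrixP => ? ?; rewrite !mxE; ring.

Section TransformedPrimalDual.
Variables (R : realType) (m n : nat) (B : 'M[R]_(n, m)).
Variables (f : 'cV[R]_m -> R) (gf : 'cV[R]_m -> 'cV[R]_m).
Variables (h : 'cV[R]_n -> R) (gh : 'cV[R]_n -> 'cV[R]_n).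
Variables (TU IV : 'M[R]_m) (TP IQ : 'M[R]_n).
Hypotheses (HTU : SPD TU) (HIV : SPD IV) (HTP : SPD TP) (HIQ : SPD IQ).

(* The scheme
   is the explicit step [IQ (p1 - pk) = - a tpd_p uk pk] followed by the inexact
   implicit step [IV (u1 - uk) = a (r - tpd_u u1 p1)], where [r] is the
   gradient of [tilde f_B] at [u1]. *)
Definition tpd_u u p := dfB gf B TP u + B^T *m (p - invmx TP *m gh p).
Definition tpd_p u p := gh p - B *m (u - invmx TU *m (gf u + B^T *m p)).

Lemma tpd_pE u p : tpd_p u p = dhB gh B TU p - B *m eU gf TU u.
Proof. by rewrite /tpd_p /dhB /eU; mx_ring. Qed.

Lemma tpd_u_saddle us ps : gf us + B^T *m ps = 0 -> B *m us = gh ps -> tpd_u us ps = 0.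
Proof.
move=> /eqP; rewrite addr_eq0 => /eqP gf_us us_ps.
by rewrite /tpd_u /dfB -us_ps gf_us; mx_ring.
Qed.

Lemma tpd_p_saddle us ps : gf us + B^T *m ps = 0 -> B *m us = gh ps -> tpd_p us ps = 0.
Proof. by move=> gf_us us_ps; rewrite /tpd_p gf_us mulmx0 subr0 us_ps subrr. Qed.

Lemma dotv_dfB_sub u u' :
  dotv (dfB gf B TP u - dfB gf B TP u') (u - u') =
  dotv (gf u - gf u') (u - u') + nsq (invmx TP) (B *m (u - u')).
Proof.
have -> : dfB gf B TP u - dfB gf B TP u' =
          (gf u - gf u') + B^T *m (invmx TP *m (B *m (u - u'))).
  by rewrite /dfB; mx_ring.
by rewrite dotvDl dotvMl trmxK.
Qed.

Lemma dotv_dhB_sub p p' :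
  dotv (dhB gh B TU p - dhB gh B TU p') (p - p') =
  dotv (gh p - gh p') (p - p') + nsq (invmx TU) (B^T *m (p - p')).
Proof.
have -> : dhB gh B TU p - dhB gh B TU p' =
          (gh p - gh p') + B *m (invmx TU *m (B^T *m (p - p'))).
  by rewrite /dhB; mx_ring.
by rewrite dotvDl dotvMl.
Qed.

(* The coupling terms [(B^T dp, du)] and [-(B du, dp)] cancel. *)
Lemma dotv_tpd_sub u p u' p' :
  dotv (tpd_u u p - tpd_u u' p') (u - u') + dotv (tpd_p u p - tpd_p u' p') (p - p') =
  dotv (dfB gf B TP u - dfB gf B TP u') (u - u')
  + dotv (dhB gh B TU p - dhB gh B TU p') (p - p')
  - dotv (invmx TP *m (B *m (u - u'))) (gh p - gh p')
  + dotv (invmx TU *m (B^T *m (p - p'))) (gf u - gf u').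
Proof.
have PT := SPD_sym (SPD_invmx HTP); have UT := SPD_sym (SPD_invmx HTU).
have -> : tpd_u u p - tpd_u u' p' = (dfB gf B TP u - dfB gf B TP u')
    + B^T *m (p - p') - B^T *m (invmx TP *m (gh p - gh p')).
  by rewrite /tpd_u; mx_ring.
have -> : tpd_p u p - tpd_p u' p' = (dhB gh B TU p - dhB gh B TU p')
    - B *m (u - u') + B *m (invmx TU *m (gf u - gf u')).
  by rewrite !tpd_pE /eU; mx_ring.
move: (dfB gf B TP u - _) (dhB gh B TU p - _) => dF dH.
have E1 : dotv (B^T *m (p - p')) (u - u') = dotv (B *m (u - u')) (p - p').
  by rewrite dotvMl trmxK dotvC.
have E2 : dotv (B^T *m (invmx TP *m (gh p - gh p'))) (u - u') =
          dotv (invmx TP *m (B *m (u - u'))) (gh p - gh p').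
  by rewrite dotvMl trmxK dotvMl PT dotvC.
have E3 : dotv (B *m (invmx TU *m (gf u - gf u'))) (p - p') =
          dotv (invmx TU *m (B^T *m (p - p'))) (gf u - gf u').
  by rewrite dotvMl dotvMl UT dotvC.
by rewrite !dotvDl !dotvNl E1 E2 E3; ring.
Qed.

Variables (muh Lh muf Lf mufB muhB : R).
Hypotheses (muh0 : 0 <= muh) (Sh : S11 h gh TP muh Lh) (Lh1 : Lh <= 1).
Hypotheses (muf0 : 0 <= muf) (Sf : S11 f gf TU muf Lf) (Lf1 : Lf <= 1).
Hypothesis SCf : strongly_convex (fB f B TP) (dfB gf B TP) IV mufB.
Hypothesis SCh : strongly_convex (hB h B TU) (dhB gh B TU) IQ muhB.

(* Half of the strong monotonicity of [dfB], [dhB] absorbs the cross terms,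
   using cocoercivity of [gf], [gh] to complete two squares. *)
Lemma tpd_strongly_monotone u p u' p' :
  mufB / 2 * nsq IV (u - u') + muhB / 2 * nsq IQ (p - p') <=
  dotv (tpd_u u p - tpd_u u' p') (u - u') + dotv (tpd_p u p - tpd_p u' p') (p - p').
Proof.
have PT := SPD_sym (SPD_invmx HTP); have UT := SPD_sym (SPD_invmx HTU).
have SCf' := strongly_convex_monotone u' u (SPD_sym HIV) SCf.
have SCh' := strongly_convex_monotone p' p (SPD_sym HIQ) SCh.
have CCf := S11_cocoercive HTU Sf muf0 Lf1 u' u.
have CCh := S11_cocoercive HTP Sh muh0 Lh1 p' p.
have Qf := nsq_ge0 (B^T *m (p - p') + (gf u - gf u')) (SPD_invmx HTU).
have Qh := nsq_ge0 (B *m (u - u') - (gh p - gh p')) (SPD_invmx HTP).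
rewrite nsqD // in Qf; rewrite nsqB // in Qh.
rewrite dotv_tpd_sub; rewrite dotv_dfB_sub in SCf' *; rewrite dotv_dhB_sub in SCh' *.
lra.
Qed.

Lemma tpd_p_step a uk pk p1 :
  p1 = pk - a *: (invmx IQ *m tpd_p uk pk) ->
  IQ *m (p1 - pk) = - (a *: tpd_p uk pk).
Proof.
move=> ->; rewrite addrAC subrr add0r mulmxN -scalemxAr mulmxA.
by rewrite mulmxV ?SPD_unitmx // mul1mx.
Qed.

Lemma tpd_u_step a uk p1 u1 : a != 0 ->
  IV *m (u1 - uk) = a *: (dftB gf gh B TP IV a uk p1 u1 - tpd_u u1 p1).
Proof.
move=> a0; have IV_K : IV *m (invmx IV *m B^T *m (p1 - invmx TP *m gh p1)) =
                       B^T *m (p1 - invmx TP *m gh p1).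
  by rewrite !mulmxA mulmxV ?SPD_unitmx // mul1mx.
rewrite /dftB (mulmxDr IV (u1 - uk)) -scalemxAr IV_K /tpd_u.
rewrite ?(mulmxDr, mulmxN, mulmxDl, mulNmx, mulmxA).
by apply/matrixP => i j; rewrite !mxE; field.
Qed.

Variables (LhB LeU LS2 : R).
Hypothesis HLh : forall x y, nsq (invmx IQ) (dhB gh B TU x - dhB gh B TU y)
                             <= LhB ^+ 2 * nsq IQ (x - y).
Hypothesis HLe : forall x y, nsq IV (eU gf TU x - eU gf TU y) <= LeU ^+ 2 * nsq IV (x - y).
Hypotheses (LS0 : 0 <= LS2) (HBS : forall w, nsq (invmx IQ) (B *m w) <= LS2 * nsq IV w).

Local Notation LSQ2 := (LhB ^+ 2 + LeU ^+ 2 * LS2).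

Lemma tpd_p_sub_young a u1 p1 uk pk d :
  2 * dotv (tpd_p u1 p1 - tpd_p uk pk) (a *: d) <=
  nsq IQ (p1 - pk) + nsq IV (u1 - uk) + a ^+ 2 * LSQ2 * nsq IQ d.
Proof.
have -> : tpd_p u1 p1 - tpd_p uk pk =
    (dhB gh B TU p1 - dhB gh B TU pk) - B *m (eU gf TU u1 - eU gf TU uk).
  by rewrite !tpd_pE; mx_ring.
have Yh : 2 * dotv (dhB gh B TU p1 - dhB gh B TU pk) (a *: d) <=
          nsq IQ (p1 - pk) + LhB ^+ 2 * nsq IQ (a *: d).
  by apply: dotv_young_le => //; [exact: sqr_ge0 | exact: nsq_ge0].
have Ye : 2 * dotv (- (B *m (eU gf TU u1 - eU gf TU uk))) (a *: d) <=
          nsq IV (u1 - uk) + LeU ^+ 2 * LS2 * nsq IQ (a *: d).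
  apply: dotv_young_le => //; [by rewrite mulr_ge0 ?sqr_ge0 | exact: nsq_ge0 |].
  rewrite nsqN (mulrC (LeU ^+ 2)) -mulrA; apply: (le_trans (HBS _)).
  exact: ler_wpM2l.
rewrite (dotvBl (dhB gh B TU p1 - dhB gh B TU pk)).
by move: Yh Ye; rewrite dotvNl !nsqZ; lra.
Qed.

Hypothesis mufB_gt0 : 0 < mufB.

Lemma tpd_energy_step us ps uk pk u1 p1 a e muk :
  gf us + B^T *m ps = 0 -> B *m us = gh ps ->
  p1 = pk - a *: (invmx IQ *m tpd_p uk pk) ->
  nsq (invmx IV) (dftB gf gh B TP IV a uk p1 u1) <= e ->
  0 < a -> muk <= mufB / 2 -> muk <= muhB - a * LSQ2 ->
  (1 + a * muk) * Energy IV IQ us ps u1 p1 <=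
  Energy IV IQ us ps uk pk + 2 * a / mufB * e.
Proof.
move=> Hs1 Hs2 Hp He a0 muk_f muk_h.
have Du := nsq_three_point u1 uk us (SPD_sym HIV).
have Dp := nsq_three_point p1 pk ps (SPD_sym HIQ).
rewrite (@tpd_u_step a uk p1) ?gt_eqF // dotvZl dotvBl in Du.
set r := dftB gf gh B TP IV a uk p1 u1 in He Du.
rewrite (tpd_p_step Hp) dotvNl dotvZl in Dp.
have Mo := tpd_strongly_monotone u1 p1 us ps.
rewrite (tpd_u_saddle Hs1 Hs2) (tpd_p_saddle Hs1 Hs2) !subr0 in Mo.
have Yr : 2 * dotv r (u1 - us) <=
          4 / mufB * nsq (invmx IV) r + mufB / 4 * nsq IV (u1 - us).
  by rewrite -[4 / mufB]invf_div; apply: dotv_young; rewrite ?divr_gt0.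
have Yp := tpd_p_sub_young a u1 p1 uk pk (p1 - ps).
rewrite dotvZr dotvBl in Yp.
have N1u := nsq_ge0 (u1 - us) HIV; have N1p := nsq_ge0 (p1 - ps) HIQ.
have aYr := ler_wpM2l (ltW a0) Yr.
have aHe := ler_wpM2l (mulr_ge0 (ltW a0) (divr_ge0 (ler0n _ 4) (ltW mufB_gt0))) He.
have aMo := ler_wpM2l (ltW a0) Mo.
have amuk_f := ler_wpM2r N1u (ler_wpM2l (ltW a0) muk_f).
have amuk_h := ler_wpM2r N1p (ler_wpM2l (ltW a0) muk_h).
have amuf_N1u : 0 <= a * mufB * nsq IV (u1 - us) by rewrite !mulr_ge0 // ltW.
rewrite /Energy; lra.
Qed.

Lemma tpd_contraction us ps uk pk u1 p1 a e :
  gf us + B^T *m ps = 0 -> B *m us = gh ps ->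
  p1 = pk - a *: (invmx IQ *m tpd_p uk pk) ->
  nsq (invmx IV) (dftB gf gh B TP IV a uk p1 u1) <= e ->
  0 < a -> a < muhB / LSQ2 ->
  let muk := Num.min (mufB / 2) (muhB - a * LSQ2) in
  Energy IV IQ us ps u1 p1 <= 1 / (1 + a * muk) * Energy IV IQ us ps uk pk
    + 2 * a / ((1 + a * muk) * mufB) * e.
Proof.
move=> Hs1 Hs2 Hp He a0 aL; cbv zeta; set muk := Num.min (mufB / 2) _.
have LSQ0 : 0 <= LSQ2.
  by apply: addr_ge0; [exact: sqr_ge0 | exact: mulr_ge0 (sqr_ge0 _) LS0].
have aLSQ : a * LSQ2 < muhB.
  move: LSQ0 aL; rewrite le_eqVlt => /orP[/eqP<-|LSQ_gt0]; last by rewrite ltr_pdivlMr.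
  by rewrite invr0 !mulr0; lra.
have muk_gt0 : 0 < muk by rewrite /muk lt_min subr_gt0 aLSQ andbT divr_gt0.
have den_gt0 : 0 < 1 + a * muk by have := mulr_gt0 a0 muk_gt0; lra.
have muk_f : muk <= mufB / 2 by rewrite /muk ge_min lexx.
have muk_h : muk <= muhB - a * LSQ2 by rewrite /muk ge_min lexx orbT.
rewrite [X in _ <= X](_ : _ = (1 + a * muk)^-1 *
    (Energy IV IQ us ps uk pk + 2 * a / mufB * e)); last by field; rewrite !gt_eqF.
by rewrite ler_pdivlMl //; apply: tpd_energy_step.
Qed.

End TransformedPrimalDual.

Lemma strongly_convex_lipschitz_le (R : realType) k (g : 'cV[R]_k -> R) dg M mu L
    (x : 'cV[R]_k) :
  SPD M -> 0 < mu -> strongly_convex g dg M mu ->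
  (forall x y, nsq (invmx M) (dg x - dg y) <= L ^+ 2 * nsq M (x - y)) ->
  x != 0 -> mu ^+ 2 <= L ^+ 2.
Proof.
move=> HM mu0 Hg HL x0; have q0 : 0 < nsq M x by case: HM => _; apply.
have Hmono := strongly_convex_monotone 0 x (SPD_sym HM) Hg.
have Hyoung := @dotv_young _ _ M (dg x - dg 0) x mu HM mu0.
have mu_inv0 : 0 <= mu^-1 by rewrite invr_ge0 ltW.
have HLx := ler_wpM2l mu_inv0 (HL x 0).
rewrite subr0 in Hmono HLx.
have : mu * nsq M x <= mu^-1 * (L ^+ 2 * nsq M x) by lra.
rewrite -(ler_pM2l mu0) !mulrA mulfV ?gt_eqF // mul1r -expr2.
by rewrite ler_pM2r.
Qed.

Lemma geometric_unroll (R : realFieldType) (E eps : nat -> R) (rho C : R) :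
  0 <= rho -> (forall k, E k.+1 <= rho * E k + C * (rho * eps k)) ->
  forall N, E N.+1 <= rho ^+ N.+1 * E 0%N + C * \sum_(k < N.+1) rho ^+ (N - k).+1 * eps k.
Proof.
move=> rho0 step; elim=> [|N IH]; first by rewrite big_ord1 subnn expr1; apply: step.
apply: (le_trans (step N.+1)).
rewrite big_ord_recr /= subnn expr1.
have -> : \sum_(i < N.+1) rho ^+ (N.+1 - i).+1 * eps i =
          rho * \sum_(i < N.+1) rho ^+ (N - i).+1 * eps i.
  rewrite mulr_sumr; apply: eq_bigr => i _.
  by rewrite subSn ?leq_ord // exprS mulrA.
have := ler_wpM2l rho0 IH; rewrite (exprS rho N.+1); lra.
Qed.

Lemma constant_step_coef (R : realFieldType) (mufB muhB L : R) :
  0 < mufB -> 0 < muhB -> 0 < L ->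
  let a := muhB / (2 * L) in
  let muk := Num.min (mufB / 2) (muhB - a * L) in
  let rho := 1 / (1 + muhB * Num.min mufB muhB / (4 * L)) in
  [/\ 0 < a, a < muhB / L, 0 < rho < 1, 1 / (1 + a * muk) = rho
    & 2 * a / ((1 + a * muk) * mufB) = muhB / (mufB * L) * rho].
Proof.
move=> mufB0 muhB0 L0 a muk rho.
have mu0 : 0 < Num.min mufB muhB by rewrite lt_min mufB0.
have mukE : muk = Num.min mufB muhB / 2.
  rewrite /muk /a (_ : muhB - _ = muhB / 2); last by field; rewrite gt_eqF.
  by rewrite minr_pMl // invr_ge0.
split.
- by rewrite divr_gt0 ?mulr_gt0.
- by rewrite ltr_pM2l // ltf_pV2 ?posrE ?mulr_gt0 //; lra.
- have x0 : 0 < muhB * Num.min mufB muhB / (4 * L) by rewrite divr_gt0 ?mulr_gt0.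
  by rewrite /rho divr_gt0 ?ltr_pdivrMr ?mul1r /=; lra.
- by rewrite mukE /rho /a; congr (1 / (1 + _)); field; rewrite gt_eqF.
by rewrite mukE /rho /a; field; rewrite !gt_eqF // addr_gt0 ?mulr_gt0.
Qed.

Theorem corollary5p7 (R : realType) (m n : nat)
  (B : 'M[R]_(n, m))
  (f : 'cV[R]_m -> R) (gf : 'cV[R]_m -> 'cV[R]_m)
  (h : 'cV[R]_n -> R) (gh : 'cV[R]_n -> 'cV[R]_n)
  (TU IV : 'M[R]_m) (TP IQ : 'M[R]_n)
  (us : 'cV[R]_m) (ps : 'cV[R]_n)
  (muh Lh muf Lf mufB muhB LhB LeU LS2 : R)
  (alpha eps : nat -> R)
  (u : nat -> 'cV[R]_m) (p : nat -> 'cV[R]_n) :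
  (n <= m)%N ->
  \rank B = n ->
  (* gf, gh are the gradients of f, h *)
  (forall x v, is_derive (0 : R) 1 (fun t : R => f (x + t *: v)) (dotv (gf x) v)) ->
  (forall x v, is_derive (0 : R) 1 (fun t : R => h (x + t *: v)) (dotv (gh x) v)) ->
  (* saddle point *)
  gf us + B^T *m ps = 0 ->
  B *m us = gh ps ->
  SPD TU -> SPD IV -> SPD TP -> SPD IQ ->
  0 <= muh -> S11 h gh TP muh Lh -> Lh <= 1 ->
  0 <= muf -> S11 f gf TU muf Lf -> Lf <= 1 ->
  0 < mufB -> strongly_convex (fB f B TP) (dfB gf B TP) IV mufB ->
  0 < muhB -> strongly_convex (hB h B TU) (dhB gh B TU) IQ muhB ->
  (* L_{h_B,IQ}: Lipschitz constant of grad h_B (dual norm IQ^{-1} vs IQ) *)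
  0 <= LhB ->
  (forall x y, nsq (invmx IQ) (dhB gh B TU x - dhB gh B TU y)
               <= LhB ^+ 2 * nsq IQ (x - y)) ->
  (* L_{e_U,IV}: Lipschitz constant of e_U in the IV norm *)
  0 <= LeU ->
  (forall x y, nsq IV (eU gf TU x - eU gf TU y) <= LeU ^+ 2 * nsq IV (x - y)) ->
  (* L_S^2 = lambda_max(IQ^{-1} B IV^{-1} B^T) *)
  eigenvalue (invmx IQ *m B *m invmx IV *m B^T) LS2 ->
  (forall a, eigenvalue (invmx IQ *m B *m invmx IV *m B^T) a -> a <= LS2) ->
  (* the iteration *)
  (forall k, p k.+1 = p k - alpha k *: (invmx IQ *m
       (gh (p k) - B *m (u k - invmx TU *m (gf (u k) + B^T *m p k))))) ->
  (forall k, nsq (invmx IV) (dftB gf gh B TP IV (alpha k) (u k) (p k.+1) (u k.+1))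
             <= eps k) ->
  let LSQ2 := LhB ^+ 2 + LeU ^+ 2 * LS2 in
  let E := Energy IV IQ us ps in
  (forall k, 0 < alpha k -> alpha k < muhB / LSQ2 ->
     let muk := Num.min (mufB / 2) (muhB - alpha k * LSQ2) in
     E (u k.+1) (p k.+1) <= 1 / (1 + alpha k * muk) * E (u k) (p k)
        + 2 * alpha k / ((1 + alpha k * muk) * mufB) * eps k)
  /\
  ((forall k, alpha k = muhB / (2 * LSQ2)) ->
     let mu := Num.min mufB muhB in
     let rho := 1 / (1 + muhB * mu / (4 * LSQ2)) in
     (0 < rho /\ rho < 1) /\
     forall N : nat,
       E (u N.+1) (p N.+1) <= rho ^+ N.+1 * E (u 0%N) (p 0%N)
         + muhB / (mufB * LSQ2) * \sum_(k < N.+1) rho ^+ (N - k).+1 * eps k).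
Proof.
move=> _ _ _ _ Hs1 Hs2 HTU HIV HTP HIQ muh0 Sh Lh1 muf0 Sf Lf1 mufB_gt0 SCf
  muhB_gt0 SCh _ HLh _ HLe eigL maxL Hp He LSQ2 E.
have LS0 := schur_eigenvalue_ge0 HIV HIQ eigL.
have HBS := nsq_mulmx_le_schur HIV HIQ LS0 maxL.
have contraction k := tpd_contraction HTU HIV HTP HIQ muh0 Sh Lh1 muf0 Sf Lf1 SCf SCh
  HLh HLe LS0 HBS mufB_gt0 Hs1 Hs2 (Hp k) (He k).
split=> [k|Hal mu rho]; first exact: contraction.
have LSQ_gt0 : 0 < LSQ2.
  have /eigenvalue_trmxP [x _ x0] := eigL.
  have := strongly_convex_lipschitz_le HIQ muhB_gt0 SCh HLh x0.
  have := mulr_ge0 (sqr_ge0 LeU) LS0; have := exprn_gt0 2 muhB_gt0; rewrite /LSQ2; lra.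
have [a0 aL /andP[rho_gt0 rho_lt1] rhoE CE] :=
  constant_step_coef mufB_gt0 muhB_gt0 LSQ_gt0.
split=> // N; apply: (geometric_unroll (E := fun k => E (u k) (p k))) => [|k].
  exact: ltW.
have := contraction k; rewrite Hal => /(_ a0 aL); cbv zeta.
by rewrite -/LSQ2 rhoE CE (mulrA _ rho).
Qed.
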